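(* Let $n\ge 2$ be a power of $2$, $m=2n$, $R=\mathbb{Z}[\zeta_m]\cong\mathbb{Z}[x]/(x^n+1)$, and let $q$ be a prime with $q\equiv 1 \pmod 4$. Let $\mathfrak{a}\mid qR$ be an ideal with $R/\mathfrak{a}\cong\mathbb{F}_{q^k}$, and let $\rho:R_q=R/qR\to R/\mathfrak{a}$ be the quotient map. Suppose the error distribution $\chi$ on $R_q$ is formed on the $\zeta$-basis with coefficients distributed according to a distribution $\chi_0$ on $\mathbb{F}_q$. Then $\rho(\zeta^k)\in\mathbb{F}_q$, the elements $1,\rho(\zeta),\dots,\rho(\zeta)^{k-1}$ form an $\mathbb{F}_q$-basis of $\mathbb{F}_{q^k}$, and the pushforward distribution $\chi':=\rho(\chi)$ on $\mathbb{F}_{q^k}$ is formed on this $\zeta$-basis with independent coefficients, each distributed according to $\chi_0'$, where $\chi_0'$ is the distribution of $\sum_{i=0}^{n/k-1}\rho(\zeta^k)^i X_i$ with $X_0,\dots,X_{n/k-1}$ independent and each distributed according to $\chi_0$.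
   Context: $\zeta=\zeta_m$ denotes a primitive $m$-th root of unity in $R$ and also its image in any quotient of $R$. The $\zeta$-basis of $R_q$ over $\mathbb{F}_q$ is $1,\zeta,\dots,\zeta^{n-1}$; for a quotient $R/\mathfrak{a}$ of $\mathbb{F}_q$-dimension $d$ the $\zeta$-basis is $1,\zeta,\dots,\zeta^{d-1}$. A distribution $\chi$ on a ring with $\zeta$-basis $1,\zeta,\ldots,\zeta^{d-1}$ is ''formed on the $\zeta$-basis with coefficients distributed according to $\chi_0$'' if a sample is $\sum_{i=0}^{d-1} e_i\zeta^i$ with $e_0,\dots,e_{d-1}$ independent and each distributed according to $\chi_0$. *)

From HB Require Import structures.
From mathcomp Require Import all_boot all_order all_algebra all_field.
Set Implicit Arguments. Unset Strict Implicit. Unset Printing Implicit Defensive.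
Import Order.TTheory GRing.Theory Num.Theory.
Local Open Scope ring_scope.

(* Law (probability mass function, values in R) of f(e_0,...,e_{N-1}) where
   e_0,...,e_{N-1} are independent, each distributed according to chi0. *)
Definition iid_law (R : pzRingType) (F : finType) (T : eqType) (N : nat)
    (chi0 : F -> R) (f : {ffun 'I_N -> F} -> T) : T -> R :=
  fun y => \sum_(e : {ffun 'I_N -> F}) ((f e == y)%:R * \prod_(i < N) chi0 (e i)).

Definition formed_on (R : pzRingType) (F : finFieldType) (V : lmodType F) (N : nat)
    (b : 'I_N -> V) (chi0 : F -> R) : V -> R :=
  iid_law chi0 (fun e : {ffun 'I_N -> F} => \sum_(i < N) e i *: b i).

Definition is_distribution (R : numDomainType) (F : finType) (chi0 : F -> R) :=
  (forall x, 0 <= chi0 x) /\ \sum_(x : F) chi0 x = 1.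

From HB Require Import structures.
From mathcomp Require Import all_boot all_order all_algebra all_field.
From mathcomp Require Import zify.
Set Implicit Arguments.
Unset Strict Implicit.
Unset Printing Implicit Defensive.

Import Order.TTheory GRing.Theory Num.Theory.

(* Let z be the image of X in L.  Since z ^+ 2n = 1 and z ^+ (q ^ k - 1) = 1, z is
   killed by a power of 2 dividing q ^ k - 1; as q = 1 mod 4, lifting the exponent
   shows that this power of 2 divides k (q - 1), so z ^+ k is fixed by the
   Frobenius map, i.e. z ^+ k = r lies in F_q.  Hence 1, z, ..., z ^+ (k - 1) span
   the k-dimensional space L and form a basis; k is the least d > 0 with z ^+ d in
   F_q, so it divides n.  Finally X ^+ (l k + j) maps to r ^+ l z ^+ j, so grouping
   the n iid coefficients into n / k blocks of size k gives the law of the image. *)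

Lemma gcdn_mod_closed (P : nat -> Prop) :
  (forall a b, P a -> P b -> P (a %% b)) ->
  forall a b, P a -> P b -> P (gcdn a b).
Proof.
move=> Pmod a b; elim/ltn_ind: b a => b IHb a Pa Pb.
have [->|b_gt0] := posnP b; first by rewrite gcdn0.
by rewrite gcdnC -gcdn_modr; apply: IHb; [exact: ltn_pmod | | exact: Pmod].
Qed.

Lemma odd_sum_expn q k : odd q -> odd (\sum_(i < k) q ^ i) = odd k.
Proof.
move=> odd_q; elim: k => [|k IHk]; first by rewrite big_ord0.
by rewrite big_ord_recr /= oddD IHk oddX odd_q orbT; case: (odd k).
Qed.

(* Lifting the exponent at the prime 2. *)
Lemma pow2_dvdn_expnB1 q k e : q %% 4 = 1 ->
  2 ^ e %| q ^ k - 1 -> 2 ^ e %| k * (q - 1).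
Proof.
move=> q_mod4; have odd_q : odd q by rewrite (divn_eq q 4) q_mod4 oddD oddM andbF.
elim/ltn_ind: k e => k IHk e.
have [odd_k|] := boolP (odd k).
  rewrite subn1 predn_exp -subn1 Gauss_dvdl => [dv_q1|]; first exact: dvdn_mull.
  by apply: coprimeXl; rewrite coprime2n odd_sum_expn.
move/negbTE=> even_k; rewrite -[k]odd_double_half even_k add0n -addnn.
set j := k./2; have [->|j_gt0] := posnP j; first by rewrite !mul0n dvdn0.
have [c qj] : exists c, q ^ j = 4 * c + 1.
  exists (q ^ j %/ 4); rewrite {1}(divn_eq (q ^ j) 4) mulnC; congr (_ + _).
  by rewrite -modnXm q_mod4 exp1n.
have -> : q ^ (j + j) - 1 = (q ^ j - 1) * 2 * (2 * c + 1) by rewrite expnD qj; nia.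
case: e => [|e]; first by rewrite dvd1n.
rewrite Gauss_dvdl; last by apply: coprimeXl; rewrite coprime2n oddD oddM.
rewrite expnS mulnC dvdn_pmul2r // => /IHk dvd_j.
rewrite addnn -muln2 mulnAC dvdn_pmul2r // dvd_j //.
by rewrite -[k in _ < k]odd_double_half even_k -addnn; lia.
Qed.

Local Open Scope ring_scope.

Lemma expr_eqN1_neq0 (R : nzRingType) (x : R) m :
  (0 < m)%N -> x ^+ m = -1 -> x != 0.
Proof.
move=> m_gt0; apply: contra_eqN => /eqP->.
by rewrite expr0n gtn_eqF //= eq_sym oppr_eq0 oner_eq0.
Qed.

Lemma expr_gcdn_eq1 (R : pzRingType) (x : R) a b :
  x ^+ a = 1 -> x ^+ b = 1 -> x ^+ gcdn a b = 1.
Proof.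
apply: (@gcdn_mod_closed (fun i => x ^+ i = 1)) => {}a {}b xa xb.
by rewrite (expr_mod _ xb).
Qed.

Lemma expr_gcdn_mem (F : fieldType) (L : fieldExtType F) (K : {subfield L})
    (x : L) a b :
  x != 0 -> x ^+ a \in K -> x ^+ b \in K -> x ^+ gcdn a b \in K.
Proof.
move=> x_neq0; apply: (@gcdn_mod_closed (fun i => x ^+ i \in K)) => {}a {}b xa xb.
have xab : x ^+ (a %% b) = x ^+ a / x ^+ b ^+ (a %/ b).
  by rewrite {2}(divn_eq a b) exprD mulnC exprM [X in X / _]mulrC mulfK ?expf_neq0.
by rewrite xab rpredM // rpredV rpredX.
Qed.

Section PowerBasis.
Variables (F : fieldType) (L : fieldExtType F).
Variable rho : {lrmorphism {poly F} -> L}.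
Hypothesis rho_surj : forall y : L, exists p : {poly F}, rho p = y.
Let z := rho 'X.

Lemma lrmorph_polyE p : rho p = \sum_(i < size p) p`_i *: z ^+ i.
Proof.
rewrite -{1}[p]coefK poly_def linear_sum; apply: eq_bigr => i _.
by rewrite linearZ rmorphXn.
Qed.

Lemma span_powers d c : (0 < d)%N -> z ^+ d = c%:A ->
  (fullv <= <<[seq (z ^+ i)%R | i <- iota 0 d]>>)%VS.
Proof.
move=> d_gt0 zd; apply/subvP => y _; have [p <-] := rho_surj y.
rewrite lrmorph_polyE; apply: rpred_sum => i _; apply: rpredZ.
rewrite (divn_eq i d) exprD mulnC exprM zd exprZn expr1n mulr_algl.
by rewrite rpredZ // memv_span // map_f // mem_iota ltn_pmod.
Qed.

Lemma dimvf_leq_power d c : (0 < d)%N -> z ^+ d = c%:A -> (\dim {:L} <= d)%N.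
Proof.
move=> d_gt0 /(span_powers d_gt0)/dimvS/leq_trans-> //.
by rewrite (leq_trans (dim_span _)) // size_map size_iota.
Qed.

Lemma dimvf_dvdn_power n : z != 0 -> (0 < n)%N ->
  z ^+ \dim {:L} \in 1%VS -> z ^+ n \in 1%VS -> (\dim {:L} %| n)%N.
Proof.
move=> z_neq0 n_gt0 zk zn; set k := \dim {:L}.
have /vlineP[c zg] := expr_gcdn_mem z_neq0 zk zn.
have g_gt0 : (0 < gcdn k n)%N by rewrite gcdn_gt0 n_gt0 orbT.
suff -> : k = gcdn k n by apply: dvdn_gcdr.
apply/eqP; rewrite eqn_leq (dimvf_leq_power g_gt0 zg).
by rewrite dvdn_leq ?dvdn_gcdl ?adim_gt0.
Qed.

Lemma basis_powers c : z ^+ \dim {:L} = c%:A ->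
  basis_of fullv [seq (z ^+ i)%R | i <- iota 0 (\dim {:L})].
Proof.
move=> zk; rewrite basisEdim size_map size_iota leqnn andbT.
by rewrite (span_powers _ zk) ?adim_gt0.
Qed.

End PowerBasis.

Section FiniteExtension.
Variables (q : nat) (L : fieldExtType 'F_q).
Hypothesis q_prime : prime q.

Lemma expr_dimvf_subn1 (x : L) : x != 0 -> x ^+ (q ^ \dim {:L} - 1) = 1.
Proof.
move=> x_neq0; apply: (mulIf x_neq0); rewrite mul1r -exprSr subn1 prednK.
  by have := Fermat's_little_theorem {:L}%AS x; rewrite memvf card_Fp // => /esym/eqP.
by rewrite expn_gt0 prime_gt0.
Qed.

Lemma mem1v_Frobenius (x : L) : (x \in 1%VS) = (x ^+ q == x).
Proof. by rewrite (Fermat's_little_theorem 1%AS) dimv1 card_Fp // expn1. Qed.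

Lemma expr_dimvf_mem1v (z : L) t : (q %% 4 = 1)%N -> z ^+ (2 ^ t.+1) = -1 ->
  z ^+ \dim {:L} \in 1%VS.
Proof.
move=> q_mod4 zn; set k := \dim {:L}.
have z_neq0 := expr_eqN1_neq0 (expn_gt0 2 t.+1) zn.
have z_2pow : z ^+ (2 ^ t.+2) = 1 by rewrite expnSr exprM zn expr2 mulN1r opprK.
set g := gcdn (2 ^ t.+2) (q ^ k - 1).
have zg : z ^+ g = 1 := expr_gcdn_eq1 z_2pow (expr_dimvf_subn1 z_neq0).
have /dvdn_pfactor[//|m _ def_g] : (g %| 2 ^ t.+2)%N by apply: dvdn_gcdl.
have /dvdnP[c def_kq] : (g %| k * (q - 1))%N.
  by rewrite def_g pow2_dvdn_expnB1 // -def_g dvdn_gcdr.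
have kq : (k * q = k * (q - 1) + k)%N by rewrite -mulnSr subn1 prednK ?prime_gt0.
by rewrite mem1v_Frobenius -exprM kq exprD def_kq mulnC exprM zg expr1n mul1r.
Qed.

End FiniteExtension.

Section BlockIndex.
Variables (n a k : nat).
Hypothesis n_eq : n = (a * k)%N.

Lemma block_ord_subproof (p : 'I_a * 'I_k) : (p.1 * k + p.2 < n)%N.
Proof. by rewrite n_eq; have := ltn_ord p.1; have := ltn_ord p.2; nia. Qed.

Definition block_ord (p : 'I_a * 'I_k) : 'I_n := Ordinal (block_ord_subproof p).

Lemma block_size_gt0 (i : 'I_n) : (0 < k)%N.
Proof.
have : (i < a * k)%N by rewrite -n_eq ltn_ord.
by case: k => //; rewrite muln0.
Qed.

Lemma unblock_ord_subproof (i : 'I_n) : (i %/ k < a)%N * (i %% k < k)%N.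
Proof.
have k_gt0 := block_size_gt0 i.
by rewrite ltn_divLR // -n_eq ltn_ord ltn_pmod.
Qed.

Definition unblock_ord (i : 'I_n) : 'I_a * 'I_k :=
  (Ordinal (unblock_ord_subproof i).1, Ordinal (unblock_ord_subproof i).2).

Lemma block_ordK : cancel block_ord unblock_ord.
Proof.
move=> [l j]; have k_gt0 : (0 < k)%N := leq_ltn_trans (leq0n j) (ltn_ord j).
congr pair; apply: val_inj => /=.
  by rewrite divnMDl // divn_small ?addn0.
by rewrite modnMDl modn_small.
Qed.

Lemma unblock_ordK : cancel unblock_ord block_ord.
Proof. by move=> i; apply: val_inj; rewrite /= -divn_eq. Qed.

Lemma big_ord_block (V : Type) (idx : V) (op : Monoid.com_law idx) (G : 'I_n -> V) :
  \big[op/idx]_(i < n) G i =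
  \big[op/idx]_(j < k) \big[op/idx]_(l < a) G (block_ord (l, j)).
Proof.
rewrite (reindex block_ord) /=; last by apply: onW_bij; exists unblock_ord;
  [apply: block_ordK | apply: unblock_ordK].
by rewrite exchange_big pair_bigA; apply: eq_bigr => -[l j].
Qed.

Lemma big_ffun_block (T : finType) (V : Type) (idx : V) (op : Monoid.com_law idx)
    (G : {ffun 'I_n -> T} -> V) :
  \big[op/idx]_(e : {ffun 'I_n -> T}) G e =
  \big[op/idx]_(E : {ffun 'I_k -> {ffun 'I_a -> T}})
     G [ffun i => E (unblock_ord i).2 (unblock_ord i).1].
Proof.
pose block (E : {ffun 'I_k -> {ffun 'I_a -> T}}) : {ffun 'I_n -> T} :=
  [ffun i => E (unblock_ord i).2 (unblock_ord i).1].
pose unblock (e : {ffun 'I_n -> T}) := [ffun j => [ffun l => e (block_ord (l, j))]].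
rewrite (reindex block) //; apply: onW_bij; exists unblock => [E|e].
  by apply/ffunP => j; apply/ffunP => l; rewrite !ffunE block_ordK.
by apply/ffunP => i; rewrite !ffunE -surjective_pairing unblock_ordK.
Qed.

End BlockIndex.

Lemma coef_sum_monomials (R : nzRingType) N (e : 'I_N -> R) (i : 'I_N) :
  (\sum_(j < N) e j *: 'X^j)`_i = e i.
Proof.
rewrite coef_sum (bigD1 i) //= coefZ coefXn eqxx mulr1 big1 ?addr0 // => j ne_ji.
by rewrite coefZ coefXn (_ : (i == j :> nat) = false) ?mulr0 // eq_sym; apply/negbTE.
Qed.

Lemma sum_monomials_inj (R : nzRingType) N :
  injective (fun e : {ffun 'I_N -> R} => \sum_(i < N) e i *: 'X^i).
Proof.
move=> e1 e2 /= e12; apply/ffunP => i.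
by rewrite -coef_sum_monomials e12 coef_sum_monomials.
Qed.

Lemma formed_on_coords (R : pzRingType) (F : finFieldType) (V : lmodType F) N
    (b : 'I_N -> V) (chi0 : F -> R) (e : {ffun 'I_N -> F}) :
  injective (fun e : {ffun 'I_N -> F} => \sum_(i < N) e i *: b i) ->
  formed_on b chi0 (\sum_(i < N) e i *: b i) = \prod_(i < N) chi0 (e i).
Proof.
move=> b_free; rewrite /formed_on /iid_law (bigD1 e) //= eqxx mul1r.
rewrite [X in _ + X]big1 ?addr0 // => e' ne_e'.
by rewrite (inj_eq b_free) (negbTE ne_e') mul0r.
Qed.

Lemma iid_law_comp (R : comPzRingType) (G F : finType) (T : eqType) N
    (mu : G -> R) (g : G -> F) (h : {ffun 'I_N -> F} -> T) y :
  iid_law (fun x => \sum_(u : G) (g u == x)%:R * mu u) h y =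
  \sum_(E : {ffun 'I_N -> G}) (h [ffun j => g (E j)] == y)%:R * \prod_(j < N) mu (E j).
Proof.
rewrite /iid_law; under eq_bigr do rewrite bigA_distr_bigA mulr_sumr.
rewrite exchange_big /=; apply: eq_bigr => E _.
rewrite (bigD1 [ffun j => g (E j)]) //= [X in _ + X]big1 ?addr0 => [|c ne_c].
  by congr (_ * _); apply: eq_bigr => j _; rewrite ffunE eqxx mul1r.
have /existsP[j ne_j] : [exists j, g (E j) != c j].
  apply: contraR ne_c => /existsPn c_eq; apply/eqP/ffunP => j.
  by rewrite ffunE; apply/esym/eqP/negPn/c_eq.
by rewrite (bigD1 j) //= (negbTE ne_j) !mul0r mulr0.
Qed.

Section Pushforward.
Variables (F : finFieldType) (L : fieldExtType F).
Variable rho : {lrmorphism {poly F} -> L}.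
Variables (n a k : nat) (r : F).
Hypothesis n_eq : n = (a * k)%N.
Hypothesis rhoXk : rho 'X ^+ k = r%:A.
Let z := rho 'X.

Lemma lrmorph_sum_monomials (e : 'I_n -> F) :
  rho (\sum_(i < n) e i *: 'X^i) =
  \sum_(j < k) (\sum_(l < a) r ^+ l * e (block_ord n_eq (l, j))) *: z ^+ j.
Proof.
rewrite linear_sum (big_ord_block n_eq); apply: eq_bigr => j _.
rewrite scaler_suml; apply: eq_bigr => l _.
rewrite linearZ rmorphXn /= exprD mulnC exprM rhoXk exprZn expr1n mulr_algl.
by rewrite scalerA mulrC.
Qed.

Lemma pushforward_formed_on_monomials (R : comPzRingType) (chi0 : F -> R) y :
  \sum_(e : {ffun 'I_n -> F})
     ((rho (\sum_(i < n) e i *: 'X^i) == y)%:R *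
      formed_on (fun i : 'I_n => 'X^i) chi0 (\sum_(i < n) e i *: 'X^i)) =
  formed_on (fun j : 'I_k => z ^+ j)
    (iid_law chi0 (fun X : {ffun 'I_a -> F} => \sum_(l < a) r ^+ l * X l)) y.
Proof.
have chiE (e : {ffun 'I_n -> F}) :
    formed_on (fun i : 'I_n => 'X^i) chi0 (\sum_(i < n) e i *: 'X^i) =
    \prod_(i < n) chi0 (e i) by apply/formed_on_coords/sum_monomials_inj.
under eq_bigr do rewrite chiE.
rewrite /formed_on iid_law_comp (big_ffun_block n_eq); apply: eq_bigr => E _.
congr (_ * _).
  rewrite lrmorph_sum_monomials; congr (_ == _)%:R; apply: eq_bigr => j _.
  by rewrite ffunE; congr (_ *: _); apply: eq_bigr => l _; rewrite ffunE block_ordK.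
rewrite (big_ord_block n_eq); apply: eq_bigr => j _.
by apply: eq_bigr => l _; rewrite ffunE block_ordK.
Qed.

End Pushforward.

Theorem mainTheorem1
  (q t k : nat) (Hq : prime q) (Hq4 : (q %% 4 = 1)%N)
  (L : fieldExtType 'F_q) (HdimL : \dim {:L} = k)
  (rho : {lrmorphism {poly 'F_q} -> L})
  (Hrho_sur : forall y : L, exists p : {poly 'F_q}, rho p = y)
  (Hrho_ker : rho ('X^(2 ^ t.+1) + 1) = 0)
  (R : realFieldType) (chi0 : 'F_q -> R) (Hchi0 : is_distribution chi0) :
  let n := (2 ^ t.+1)%N in
  let chi : {poly 'F_q} -> R :=
    formed_on (fun i : 'I_n => ('X^i : {poly 'F_q})) chi0 in
  (* pushforward rho(chi): sum over the (finite) support of chi, which is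
     parametrized bijectively by the coefficient vectors e *)
  let chi' : L -> R := fun y =>
    \sum_(e : {ffun 'I_n -> 'F_q})
       ((rho (\sum_(i < n) e i *: 'X^i) == y)%:R * chi (\sum_(i < n) e i *: 'X^i)) in
  exists r : 'F_q,
    [/\ rho ('X^k) = r%:A,
        basis_of fullv [seq rho 'X ^+ i | i <- iota 0 k] &
        forall y : L,
          chi' y =
          formed_on (fun j : 'I_k => rho 'X ^+ j)
            (iid_law chi0 (fun X : {ffun 'I_(n %/ k) -> 'F_q} =>
                              \sum_(i < n %/ k) r ^+ i * X i)) y].
Proof.
move=> n chi chi'; subst k; set z := rho 'X.
have n_gt0 : (0 < n)%N by rewrite expn_gt0.
have zn : z ^+ n = -1.
  by apply/eqP; rewrite -addr_eq0 -Hrho_ker rmorphD rmorph1 rmorphXn.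
have /vlineP[r zk] := expr_dimvf_mem1v Hq Hq4 zn.
have kn : (\dim {:L} %| n)%N.
  apply: (dimvf_dvdn_power Hrho_sur (expr_eqN1_neq0 n_gt0 zn) n_gt0).
    by rewrite zk rpredZ ?mem1v.
  by rewrite zn rpredN mem1v.
exists r; split; first by rewrite rmorphXn.
  exact: (basis_powers Hrho_sur zk).
move=> y; apply: (pushforward_formed_on_monomials (a := n %/ \dim {:L})).
  by rewrite divnK.
exact: zk.
Qed.
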